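(* Let ${\mathbb K}$ be a field, $n\geqslant 2$ and $N$ a positive integer. Let $L$ be a set of lines of $\mathrm{AG}_n({\mathbb K})$, let $D\subseteq\mathrm{PG}_{n-1}({\mathbb K})$ be the set of directions of the lines of $L$, and let $S$ be a set of points of $\mathrm{AG}_n({\mathbb K})$ such that every line of $L$ is incident with at least $N$ points of $S$. If $D$ contains an $N^{n-1}$ grid then $$|S|\geqslant\binom{N+n-1}{n}.$$
   Context: The direction of an affine line $\{u+\lambda v:\lambda\in{\mathbb K}\}$ is the point $\langle v\rangle$ of $\mathrm{PG}_{n-1}({\mathbb K})$. An $N^{n-1}$ grid in $\mathrm{PG}_{n-1}({\mathbb K})$ is a point set which, with respect to a suitable basis, has the form $\{\langle(a_1,\ldots,a_{n-1},1)\rangle : a_i\in A_i\}$, where each $A_i\subseteq{\mathbb K}$ has size $N$. *)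

From mathcomp Require Import all_boot all_order all_algebra.
Set Implicit Arguments. Unset Strict Implicit. Unset Printing Implicit Defensive.
Import GRing.Theory.
Local Open Scope ring_scope.

(* Points of AG_n(K) are row vectors 'rV[K]_n.
   An affine line is given by a parametrisation (u, v) with v <> 0:
   the line {u + lambda v : lambda in K}. *)

Definition on_line (K : fieldType) (n : nat) (uv : 'rV[K]_n * 'rV[K]_n)
  (x : 'rV[K]_n) : Prop :=
  exists lambda : K, x = uv.1 + lambda *: uv.2.

Definition in_directions (K : fieldType) (n : nat)
  (L : 'rV[K]_n * 'rV[K]_n -> Prop) (w : 'rV[K]_n) : Prop :=
  exists uv, L uv /\ exists c : K, c != 0 /\ uv.2 = c *: w.

(* The vector with coordinates (a_1, ..., a_{n-1}, 1) w.r.t. the basis given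
   by the rows of B (coordinates j < n-1 read from f, last coordinate 1). *)
Definition grid_vec (K : fieldType) (n : nat) (B : 'M[K]_n) (f : 'I_n -> K)
  : 'rV[K]_n :=
  (\row_(j < n) (if (j < n.-1)%N then f j else 1)) *m B.

Definition contains_grid (K : fieldType) (n N : nat)
  (L : 'rV[K]_n * 'rV[K]_n -> Prop) : Prop :=
  exists (B : 'M[K]_n) (A : 'I_n -> seq K),
    B \in unitmx /\
    (forall j : 'I_n, (j < n.-1)%N -> uniq (A j) /\ size (A j) = N) /\
    (forall f : 'I_n -> K,
        (forall j : 'I_n, (j < n.-1)%N -> f j \in A j) ->
        in_directions L (grid_vec B f)).

Definition at_least (K : fieldType) (n m : nat) (X : 'rV[K]_n -> Prop) : Prop :=
  exists s : seq 'rV[K]_n, uniq s /\ (forall x, x \in s -> X x) /\ (m <= size s)%N.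

(* If [|S| < C(N+n-1, n)], the number of monomials of degree at most [N-1] in [n]
   variables, linear algebra gives a nonzero polynomial [f] of degree at most [N-1] vanishing
   on [S] (in the coordinates of the basis defining the grid). Let [f_d] be its top
   homogeneous component. On a line [u + l v] of [L], [l |-> f(u + l v)] has degree at most
   [d < N] and at least [N] roots, so it is zero, and its coefficient of [l^d], which is
   [f_d(v)], vanishes. Thus [f_d] vanishes at every direction of [L], in particular at every
   grid point [(a_1, ..., a_(n-1), 1)]. Setting the last variable to [1] keeps the monomials
   of [f_d] distinct and yields a polynomial of degree less than [N] in each variable
   vanishing on a product of [N]-sets; its coefficients are therefore zero, so [f_d = 0]. *)

From mathcomp Require Import all_boot all_order all_algebra.
From mathcomp Require Import zify.
From Stdlib Require Import Classical.
Import GRing.Theory.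
Set Implicit Arguments. Unset Strict Implicit. Unset Printing Implicit Defensive.
Local Open Scope ring_scope.

Section TopCoefficient.
Variable R : nzRingType.

Lemma top_coefM (p q : {poly R}) a b :
  (size p <= a.+1)%N -> (size q <= b.+1)%N ->
  (size (p * q)%R <= (a + b).+1)%N /\ (p * q)`_(a + b) = p`_a * q`_b.
Proof.
move=> hp hq; split; first by apply: leq_trans (size_polyMleq _ _) _; lia.
have ha : (a < (a + b).+1)%N by lia.
rewrite coefM (bigD1 (Ordinal ha)) //= addKn big1 ?addr0 // => j /eqP ne_ja.
have [lt_ja|lt_aj|eq_ja] := ltngtP j a.
- by rewrite [q`_ _]nth_default ?mulr0 //; apply: leq_trans hq _; lia.
- by rewrite nth_default ?mul0r //; apply: leq_trans hp _.
- by case: ne_ja; apply: val_inj.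
Qed.

Lemma top_coef_prod (I : Type) (r : seq I) (F : I -> {poly R}) (k : I -> nat) :
  (forall i, size (F i) <= (k i).+1)%N ->
  (size (\prod_(i <- r) F i)%R <= (\sum_(i <- r) k i).+1)%N /\
  (\prod_(i <- r) F i)`_(\sum_(i <- r) k i) = \prod_(i <- r) (F i)`_(k i).
Proof.
move=> hF; elim: r => [|i r [IHsize IHcoef]]; first by rewrite !big_nil size_poly1 coef1.
rewrite !big_cons; have [hsize hcoef] := top_coefM (hF i) IHsize.
by rewrite hcoef IHcoef.
Qed.

Lemma top_coef_linear_exp (x y : R) k :
  (size ((x%:P + y *: 'X) ^+ k)%R <= k.+1)%N /\ ((x%:P + y *: 'X) ^+ k)`_k = y ^+ k.
Proof.
have size_lin : (size (x%:P + y *: 'X)%R <= 2)%N.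
  rewrite (leq_trans (size_polyD _ _)) // geq_max (leq_trans (size_polyC_leq1 _)) //=.
  by rewrite (leq_trans (size_scale_leq _ _)) // size_polyX.
elim: k => [|k [IHsize IHcoef]]; first by rewrite !expr0 size_poly1 coef1.
have [hsize hcoef] := top_coefM IHsize size_lin.
rewrite addn1 in hsize hcoef; rewrite exprSr; split => //.
by rewrite hcoef IHcoef coefD coefC coefZ coefX /= add0r mulr1 -exprSr.
Qed.

End TopCoefficient.

Definition monomial (R : nzRingType) (m : nat) (f : nat -> nat) (a : nat -> R) : R :=
  \prod_(0 <= j < m) a j ^+ f j.

Definition total_degree (m : nat) (f : nat -> nat) : nat := (\sum_(0 <= j < m) f j)%N.

Lemma total_degreeS m f : total_degree m.+1 f = (total_degree m f + f m)%N.
Proof. by rewrite /total_degree big_nat_recr. Qed.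

Lemma eq_monomial (R : nzRingType) m f (a b : nat -> R) :
  (forall j, (j < m)%N -> a j = b j) -> monomial m f a = monomial m f b.
Proof. by move=> eq_ab; apply: eq_big_nat => j /andP [_ /eq_ab ->]. Qed.

Lemma monomialS (R : nzRingType) m f (a : nat -> R) :
  monomial m.+1 f a = monomial m f a * a m ^+ f m.
Proof. by rewrite /monomial big_nat_recr. Qed.

Lemma monomialZ (R : comNzRingType) m f (x : R) (a : nat -> R) :
  monomial m f (fun j => x * a j) = x ^+ total_degree m f * monomial m f a.
Proof.
by rewrite /monomial (eq_bigr _ (fun j _ => exprMn _ _ _)) big_split /= prodrXr.
Qed.

Section PolynomialFunctions.
Variables (K : fieldType) (I : finType) (m : nat) (e : I -> nat -> nat).
Implicit Types (c : I -> K) (a : nat -> K).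

Definition poly_fun c a := \sum_i c i * monomial m (e i) a.

Definition top_form c d a := \sum_(i | total_degree m (e i) == d) c i * monomial m (e i) a.

Lemma eq_poly_fun c a b : (forall j, (j < m)%N -> a j = b j) -> poly_fun c a = poly_fun c b.
Proof. by move=> eq_ab; apply: eq_bigr => i _; rewrite (eq_monomial _ eq_ab). Qed.

Lemma eq_top_form c d a b :
  (forall j, (j < m)%N -> a j = b j) -> top_form c d a = top_form c d b.
Proof. by move=> eq_ab; apply: eq_bigr => i _; rewrite (eq_monomial _ eq_ab). Qed.

Lemma exists_vanishing_poly_fun (T : eqType) (s : seq T) (g : T -> nat -> K) :
  (size s < #|I|)%N ->
  exists2 c, (exists i, c i != 0) & forall x, x \in s -> poly_fun c (g x) = 0.
Proof.
move=> lt_s_I.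
pose E := \matrix_(r < #|I|, k < size s) monomial m (e (enum_val r)) (g (tnth (in_tuple s) k)).
have [v /sub_kermxP vE v_nz] : exists2 v : 'rV[K]_#|I|, (v <= kermx E)%MS & v != 0.
  by apply/rowV0Pn; rewrite -mxrank_eq0 mxrank_ker; have := rank_leq_col E; lia.
exists (fun i => v 0 (enum_rank i)).
  apply/existsP; apply: contraNT v_nz; rewrite negb_exists => /forallP v0.
  by apply/eqP/rowP => r; rewrite mxE -(enum_valK r); apply/eqP/negbNE/v0.
move=> x xs; have xs_idx : (index x s < size s)%N by rewrite index_mem.
have := congr1 (fun M : 'rV_(size s) => M 0 (Ordinal xs_idx)) vE.
rewrite !mxE => <-; rewrite (reindex enum_rank) /=; last first.
  by apply: onW_bij; apply: enum_rank_bij.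
apply: eq_bigr => i _; rewrite mxE enum_rankK (tnth_nth x) /= nth_index //.
Qed.

Definition line_poly c a b : {poly K} :=
  \sum_i c i *: \prod_(0 <= j < m) ((a j)%:P + b j *: 'X) ^+ e i j.

Lemma horner_line_poly c a b l :
  (line_poly c a b).[l] = poly_fun c (fun j => a j + l * b j).
Proof.
rewrite /line_poly horner_sum; apply: eq_bigr => i _.
rewrite hornerZ horner_prod; congr (_ * _); apply: eq_bigr => j _.
by rewrite horner_exp hornerD hornerC hornerZ hornerX mulrC.
Qed.

Lemma top_coef_line_poly c d a b :
  (forall i, c i != 0 -> (total_degree m (e i) <= d)%N) ->
  (size (line_poly c a b) <= d.+1)%N /\ (line_poly c a b)`_d = top_form c d b.
Proof.
move=> c_deg.
pose P i := \prod_(0 <= j < m) ((a j)%:P + b j *: 'X) ^+ e i j.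
have P_top i : (size (P i) <= (total_degree m (e i)).+1)%N /\
               (P i)`_(total_degree m (e i)) = monomial m (e i) b.
  have [|size_P coef_P] := top_coef_prod (index_iota 0 m)
    (F := fun j => ((a j)%:P + b j *: 'X) ^+ e i j) (k := e i).
    by move=> j; case: (top_coef_linear_exp (a j) (b j) (e i j)).
  split => //; rewrite coef_P; apply: eq_bigr => j _.
  by case: (top_coef_linear_exp (a j) (b j) (e i j)).
split.
  apply: (big_ind (fun p : {poly K} => size p <= d.+1)%N) => [|p q|i _].
  - by rewrite size_poly0.
  - by move=> hp hq; rewrite (leq_trans (size_polyD _ _)) // geq_max hp hq.
  - have [->|/c_deg le_deg] := eqVneq (c i) 0; first by rewrite scale0r size_poly0.
    by rewrite (leq_trans (size_scale_leq _ _)) // (leq_trans (P_top i).1).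
rewrite coef_sum /top_form [RHS]big_mkcond /=; apply: eq_bigr => i _; rewrite coefZ.
have [lt_deg|gt_deg|<-] := ltngtP (total_degree m (e i)) d.
- by rewrite nth_default ?mulr0 // (leq_trans (P_top i).1).
- have [->|/c_deg] := eqVneq (c i) 0; first by rewrite mul0r.
  by rewrite leqNgt gt_deg.
- by rewrite (P_top i).2.
Qed.

Lemma top_form_eq0_on_line c d a b (ls : seq K) :
  (forall i, c i != 0 -> (total_degree m (e i) <= d)%N) ->
  uniq ls -> (d < size ls)%N ->
  (forall l, l \in ls -> poly_fun c (fun j => a j + l * b j) = 0) ->
  top_form c d b = 0.
Proof.
move=> c_deg uniq_ls lt_d_ls vanish.
have [size_lp <-] := top_coef_line_poly a b c_deg.
suff -> : line_poly c a b = 0 by rewrite coef0.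
apply: (roots_geq_poly_eq0 (rs := ls)) => //; last exact: leq_trans lt_d_ls.
by apply/allP => l /vanish; rewrite /root horner_line_poly => ->.
Qed.

End PolynomialFunctions.

Lemma sum_coef_eq0_of_roots (K : idomainType) (I : finType) (P : pred I)
    (k : I -> nat) (b : I -> K) (A : seq K) :
  uniq A -> (forall i, P i -> k i < size A)%N ->
  (forall x, x \in A -> \sum_(i | P i) b i * x ^+ k i = 0) ->
  forall k0, \sum_(i | P i && (k i == k0)) b i = 0.
Proof.
move=> uniq_A k_lt vanish k0.
pose Q := \sum_(i | P i) b i *: 'X^(k i).
have -> : \sum_(i | P i && (k i == k0)) b i = Q`_k0.
  rewrite coef_sum big_mkcondr /=; apply: eq_bigr => i _.
  by rewrite coefZ coefXn eq_sym; case: eqP; rewrite ?mulr1 ?mulr0.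
suff -> : Q = 0 by rewrite coef0.
apply: (roots_geq_poly_eq0 (rs := A)) => //.
  apply/allP => x xA; rewrite /root /Q horner_sum -[X in _ == X](vanish x xA).
  by apply/eqP; apply: eq_bigr => i _; rewrite hornerZ hornerXn.
apply: (big_ind (fun p : {poly K} => size p <= size A)%N) => [|p q hp hq|i Pi].
- by rewrite size_poly0.
- by rewrite (leq_trans (size_polyD _ _)) // geq_max hp hq.
- by rewrite (leq_trans (size_scale_leq _ _)) // size_polyXn k_lt.
Qed.

Lemma grid_coef_eq0 (K : idomainType) (N : nat) (A : nat -> seq K) m (I : finType)
    (P : pred I) (e : I -> nat -> nat) (c : I -> K) :
  (forall j, (j < m)%N -> uniq (A j) /\ size (A j) = N) ->
  (forall i j, P i -> (j < m)%N -> (e i j < N)%N) ->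
  {in P &, forall i i', (forall j, (j < m)%N -> e i j = e i' j) -> i = i'} ->
  (forall a, (forall j, (j < m)%N -> a j \in A j) ->
     \sum_(i | P i) c i * monomial m (e i) a = 0) ->
  forall i, P i -> c i = 0.
Proof.
elim: m P => [|m IHm] P grid_A e_lt e_inj vanish i0 Pi0.
  have : \sum_(i | P i) c i * monomial 0 (e i) (fun _ => 0) = 0 by apply: vanish.
  rewrite (bigD1 i0) //= /monomial big_geq // mulr1 big1 ?addr0 // => i /andP [Pi ne_i].
  by rewrite (e_inj i i0 Pi Pi0) ?eqxx in ne_i.
pose P' i := P i && (e i m == e i0 m).
have vanish' a : (forall j, (j < m)%N -> a j \in A j) ->
    \sum_(i | P' i) c i * monomial m (e i) a = 0.
  move=> a_grid; have [uniq_Am size_Am] := grid_A m (ltnSn m).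
  apply: (sum_coef_eq0_of_roots (A := A m)) => [//|i Pi|x xA].
    by rewrite size_Am e_lt.
  pose ax j := if j == m then x else a j.
  have ax_grid j : (j < m.+1)%N -> ax j \in A j.
    by rewrite /ax; case: eqP => [->|ne_jm] // lt_jm; apply: a_grid; lia.
  rewrite -[RHS](vanish ax ax_grid); apply: eq_bigr => i _.
  rewrite monomialS -mulrA /ax eqxx; congr (_ * (_ * _)).
  by apply: eq_monomial => j lt_jm; case: eqP => //; lia.
apply: (IHm P') vanish' _ _; rewrite /P'.
- by move=> j lt_jm; apply: grid_A; apply: ltnW.
- by move=> i j /andP [Pi _] lt_jm; apply: e_lt => //; apply: ltnW.
- move=> i i' /andP [Pi /eqP ei] /andP [Pi' /eqP ei'] eq_e.
  apply: e_inj => // j lt_jm; have [/eq_e //|?|->] := ltngtP j m; first lia.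
  by rewrite ei ei'.
- by rewrite Pi0 eqxx.
Qed.

(* A monomial of degree at most [k] in the variables [x_0, ..., x_(q-1)] is encoded by the
   sorted [k]-tuple listing its variables with repetition, padded with the extra letter [q];
   the exponent of [x_j] is the multiplicity of [j]. *)
Section SortedTuples.
Variables k q : nat.

Definition sorted_tuple := {t : k.-tuple 'I_q.+1 | sorted leq (map val t)}.

Definition multiplicity (t : sorted_tuple) (j : nat) : nat := count_mem j (map val (val t)).

Lemma card_sorted_tuple : #|{: sorted_tuple}| = 'C(k + q, k).
Proof. by rewrite card_sig -card_sorted_tuples; apply: eq_card => t; rewrite inE. Qed.

Lemma multiplicity_le t j : (multiplicity t j <= k)%N.
Proof. by rewrite -(size_tuple (val t)) -(size_map val) count_size. Qed.

Lemma total_degree_multiplicity t : total_degree q.+1 (multiplicity t) = k.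
Proof.
rewrite /total_degree /multiplicity -[RHS](size_tuple (val t)) -(size_map val).
have : all (fun j => j < q.+1)%N (map val (val t)).
  by apply/allP => x /mapP [j _ ->]; apply: ltn_ord.
elim: (map val (val t)) => [|j s IHs] /=; first by move=> _; rewrite big1.
move=> /andP [lt_jq /IHs <-]; rewrite big_split /=.
suff -> : (\sum_(0 <= i < q.+1) (j == i))%N = 1%N by [].
rewrite (bigD1_seq j) ?mem_iota ?iota_uniq //= eqxx big1 // => i.
by rewrite eq_sym => /negbTE ->.
Qed.

Lemma multiplicity_inj t t' :
  (forall j, (j < q.+1)%N -> multiplicity t j = multiplicity t' j) -> t = t'.
Proof.
move=> eq_mult; apply/val_inj/val_inj/(inj_map val_inj).
apply: (sorted_eq leq_trans anti_leq (valP t) (valP t')).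
apply/allP => j _; apply/eqP; have [/eq_mult //|lt_qj] := ltnP j q.+1.
have absent (u : k.-tuple 'I_q.+1) : count_mem j (map val u) = 0%N.
  by apply/count_memPn/mapP => -[i _ ji]; move: (ltn_ord i); rewrite -ji; lia.
by rewrite !absent.
Qed.

End SortedTuples.

Lemma multiplicity_inj_by_degree k n (t t' : sorted_tuple k n.+1) :
  total_degree n.+1 (multiplicity t) = total_degree n.+1 (multiplicity t') ->
  (forall j, (j < n)%N -> multiplicity t j = multiplicity t' j) -> t = t'.
Proof.
move=> eq_top eq_low; apply: multiplicity_inj => j lt_j.
have eq_low_deg : total_degree n (multiplicity t) = total_degree n (multiplicity t').
  by apply: eq_big_nat => i /andP [_ /eq_low].
have := total_degree_multiplicity t; have := total_degree_multiplicity t'.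
rewrite !total_degreeS in eq_top *.
have [/eq_low //|lt_nj|->] := ltngtP j n; last lia.
have -> : j = n.+1 by lia.
lia.
Qed.

Lemma total_degree_multiplicity_le k n (t : sorted_tuple k n.+1) :
  (total_degree n.+1 (multiplicity t) <= k)%N.
Proof. by have := total_degree_multiplicity t; rewrite total_degreeS; lia. Qed.

Lemma top_form_dehomogenize (K : fieldType) (I : finType) m (e : I -> nat -> nat)
    (c : I -> K) d (x : K) (a : nat -> K) :
  top_form m.+1 e c d (fun j => x * (if (j < m)%N then a j else 1)) =
  x ^+ d * \sum_(i | total_degree m.+1 (e i) == d) c i * monomial m (e i) a.
Proof.
rewrite /top_form mulr_sumr; apply: eq_bigr => i /eqP deg_i.
rewrite monomialZ deg_i monomialS ltnn expr1n mulr1 mulrCA; congr (_ * (_ * _)).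
by apply: eq_monomial => j ->.
Qed.

Lemma top_coef_eq0_on_scaled_grid (K : fieldType) (n N : nat) (A : nat -> seq K)
    (c : sorted_tuple N.-1 n.+1 -> K) d :
  (0 < N)%N ->
  (forall j, (j < n)%N -> uniq (A j) /\ size (A j) = N) ->
  (forall a, (forall j, (j < n)%N -> a j \in A j) ->
     exists2 x, x != 0 &
       top_form n.+1 (@multiplicity _ _) c d (fun j => x * (if (j < n)%N then a j else 1)) = 0) ->
  forall i, total_degree n.+1 (multiplicity i) = d -> c i = 0.
Proof.
move=> N_gt0 grid_A vanish i deg_i.
apply: (grid_coef_eq0 (A := A) (m := n) (P := [pred t | total_degree n.+1 (multiplicity t) == d])
  (e := @multiplicity _ _) grid_A); last by rewrite inE deg_i.
- by move=> t j _ _; have := multiplicity_le t j; lia.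
- move=> t t'; rewrite !inE => /eqP deg_t /eqP deg_t' eq_low.
  by apply: multiplicity_inj_by_degree => //; rewrite deg_t deg_t'.
- move=> a /vanish [x x_nz]; rewrite top_form_dehomogenize => /eqP.
  by rewrite mulf_eq0 expf_eq0 (negbTE x_nz) andbF => /eqP.
Qed.

Lemma at_least_or_covered (K : fieldType) n (S : 'rV[K]_n -> Prop) m :
  at_least m S \/ exists2 s, (size s < m)%N & forall x, S x -> x \in s.
Proof.
elim: m => [|m [[s [uniq_s [s_S size_s]]]|[s size_s S_s]]]; first by left; exists [::].
- have [le_ms|lt_sm] := leqP m.+1 (size s); first by left; exists s.
  have [[x [Sx x_s]]|S_s] := classic (exists x, S x /\ x \notin s).
    left; exists (x :: s); split; first by rewrite /= x_s.
    split=> [y|]; last by rewrite /=; lia.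
    by rewrite inE => /predU1P [->|/s_S].
  right; exists s => // x Sx; apply/negPn/negP => x_s.
  by apply: S_s; exists x.
- by right; exists s => //; lia.
Qed.

Lemma on_line_seq (K : fieldType) n (uv : 'rV[K]_n * 'rV[K]_n) (s : seq 'rV[K]_n) :
  (forall x, x \in s -> on_line uv x) -> exists ls, s = map (fun l => uv.1 + l *: uv.2) ls.
Proof.
elim: s => [|x s IHs] s_line; first by exists [::].
have [l ->] := s_line x (mem_head _ _).
have [|ls ->] := IHs; first by move=> y ys; apply: s_line; rewrite inE ys orbT.
by exists (l :: ls).
Qed.

(* [inord] sends the meaningless indices [j > n] to [0]. *)
Definition coords (K : fieldType) n (x : 'rV[K]_n.+1) (j : nat) : K := x 0 (inord j).

Lemma top_form_eq0_on_rich_line (K : fieldType) n (M : 'M[K]_n.+1) (I : finType)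
    (e : I -> nat -> nat) (c : I -> K) d N (S : 'rV[K]_n.+1 -> Prop) uv :
  (forall i, c i != 0 -> (total_degree n.+1 (e i) <= d)%N) -> (d < N)%N ->
  (forall x, S x -> poly_fun n.+1 e c (coords (x *m M)) = 0) ->
  at_least N (fun x => S x /\ on_line uv x) ->
  top_form n.+1 e c d (coords (uv.2 *m M)) = 0.
Proof.
move=> c_deg lt_dN vanish [s [uniq_s [s_line size_s]]].
have [ls def_s] := on_line_seq (fun x xs => (s_line x xs).2).
apply: (top_form_eq0_on_line (a := coords (uv.1 *m M)) (ls := ls) c_deg).
- by move: uniq_s; rewrite def_s => /map_uniq.
- by rewrite def_s size_map in size_s; apply: leq_trans size_s.
- move=> l l_ls; have xs : uv.1 + l *: uv.2 \in s by rewrite def_s; apply/mapP; exists l.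
  rewrite -(vanish _ (s_line _ xs).1); apply: eq_poly_fun => j _.
  by rewrite /coords mulmxDl -scalemxAl !mxE.
Qed.

Lemma coords_grid_direction (K : fieldType) n (B : 'M[K]_n.+1) (f : 'I_n.+1 -> K) x j :
  B \in unitmx -> (j < n.+1)%N ->
  coords ((x *: grid_vec B f) *m invmx B) j = x * (if (j < n)%N then f (inord j) else 1).
Proof. by move=> B_unit lt_jn; rewrite -scalemxAl mulmxK // /coords !mxE inordK. Qed.

Theorem theorem3p3 (K : fieldType) (n N : nat)
  (L : 'rV[K]_n * 'rV[K]_n -> Prop) (S : 'rV[K]_n -> Prop) :
  (2 <= n)%N -> (0 < N)%N ->
  (forall uv, L uv -> uv.2 != 0) ->
  (forall uv, L uv -> at_least N (fun x => S x /\ on_line uv x)) ->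
  contains_grid N L ->
  at_least 'C(N + n - 1, n) S.
Proof.
case: n L S => [//|n] L S _ N_gt0 _ L_rich [B [A [B_unit [A_grid L_grid]]]].
have [//|[s size_s S_s]] := at_least_or_covered S 'C(N + n.+1 - 1, n.+1).
pose e := @multiplicity N.-1 n.+1.
have [|c [i0 c_i0] c_s] :=
  exists_vanishing_poly_fun n.+1 e (fun x => coords (x *m invmx B)) (s := s).
  rewrite card_sorted_tuple -bin_sub; last lia.
  by move: size_s; congr (_ < 'C(_, _))%N; lia.
have [i1 c_i1 c_deg] :=
  arg_maxnP (fun i => total_degree n.+1 (e i)) (P := [pred i | c i != 0]) c_i0.
have lt_dN : (total_degree n.+1 (e i1) < N)%N.
  by rewrite (leq_ltn_trans (total_degree_multiplicity_le _)) //; lia.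
suff : c i1 = 0 by move/eqP: c_i1.
apply: (top_coef_eq0_on_scaled_grid (A := fun j => A (inord j)) N_gt0 _ _ (erefl _)).
  by move=> j lt_jn; apply: A_grid; rewrite inordK; lia.
move=> a a_grid; have [|uv [Luv [x [x_nz def_v]]]] := L_grid (fun j => a j).
  by move=> j lt_jn; have := a_grid j lt_jn; rewrite inord_val.
exists x => //; rewrite -(top_form_eq0_on_rich_line (M := invmx B) c_deg lt_dN _ (L_rich uv Luv)).
  by apply: eq_top_form => j lt_jn; rewrite def_v coords_grid_direction // inordK.
by move=> y /S_s; apply: c_s.
Qed.
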